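(* Let $X$ be a compact subset of a real normed vector space $(V,\|\cdot\|)$. For all $u,v\in\Delta(X)$, $d_1(u,v)=d_2(u,v)=d_2^+(u,v)$.
   Context: $E=\mathcal C(X)$ is the space of continuous real functions on $X$. $\Delta(X)$ is the set of Borel probability measures on $X$, with $u(f)=\int f\,du$. - $D_1=\{f\in E:\ \forall x,y\in X,\ \forall a,b\ge 0,\ af(x)-bf(y)\le\|ax-by\|\}$, and $d_1(u,v)=\sup_{f\in D_1}\big(u(f)-v(f)\big)$. - $D_2=\{(f,g)\in E\times E:\ \forall x,y\in X,\ \forall a,b\ge0,\ af(x)+bg(y)\le\|ax-by\|\}$, and $d_2(u,v)=\sup_{(f,g)\in D_2}\big(u(f)+v(g)\big)$. - For $\varepsilon>0$, $D_2^\varepsilon=\{(f,g)\in E\times E:\ \forall x,y\in X,\ \forall a,b\in[0,1],\ af(x)+bg(y)\le\varepsilon+\|ax-by\|\}$ and $d_2^\varepsilon(u,v)=\sup_{(f,g)\in D_2^\varepsilon}\big(u(f)+v(g)\big)$. Then $d_2^+(u,v)=\inf_{\varepsilon>0}d_2^\varepsilon(u,v)$. *)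

From HB Require Import structures.
From mathcomp Require Import all_boot all_order all_algebra.
From mathcomp Require Import all_classical all_reals all_analysis.
Set Implicit Arguments. Unset Strict Implicit. Unset Printing Implicit Defensive.
Import Order.TTheory GRing.Theory Num.Theory.
Import numFieldNormedType.Exports.
Local Open Scope classical_set_scope.
Local Open Scope ring_scope.

Definition borelType (R : realType) (V : normedModType R) : Type :=
  g_sigma_algebraType (@open V).

Section Dists.
Variables (R : realType) (V : normedModType R) (X : set V).

(* E = C(X): real functions on V considered only through their restriction
   to X, which must be continuous on X (subspace topology). *)
Definition CX (f : V -> R) : Prop := {within X, continuous f}.

(* u(f) = \int f du, for a probability measure on X (viewed as a Borel
   probability measure on V concentrated on X). *)
Definition ev (u : probability (borelType V) R) (f : V -> R) : \bar R :=
  (\int[u]_(x in X) (f x)%:E)%E.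

Definition D1 : set (V -> R) :=
  [set f | CX f /\ forall x y, X x -> X y -> forall a b : R, 0 <= a -> 0 <= b ->
     a * f x - b * f y <= `| a *: x - b *: y |].

Definition d1 (u v : probability (borelType V) R) : \bar R :=
  ereal_sup [set (ev u f - ev v f)%E | f in D1].

Definition D2 : set ((V -> R) * (V -> R)) :=
  [set fg | CX fg.1 /\ CX fg.2 /\ forall x y, X x -> X y -> forall a b : R,
     0 <= a -> 0 <= b -> a * fg.1 x + b * fg.2 y <= `| a *: x - b *: y |].

Definition d2 (u v : probability (borelType V) R) : \bar R :=
  ereal_sup [set (ev u fg.1 + ev v fg.2)%E | fg in D2].

Definition D2eps (eps : R) : set ((V -> R) * (V -> R)) :=
  [set fg | CX fg.1 /\ CX fg.2 /\ forall x y, X x -> X y -> forall a b : R,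
     0 <= a <= 1 -> 0 <= b <= 1 ->
     a * fg.1 x + b * fg.2 y <= eps + `| a *: x - b *: y |].

Definition d2eps (eps : R) (u v : probability (borelType V) R) : \bar R :=
  ereal_sup [set (ev u fg.1 + ev v fg.2)%E | fg in D2eps eps].

Definition d2plus (u v : probability (borelType V) R) : \bar R :=
  ereal_inf [set d2eps eps u v | eps in [set e : R | 0 < e]].

End Dists.

From HB Require Import structures.
From mathcomp Require Import all_boot all_order all_algebra.
From mathcomp Require Import all_classical all_reals all_analysis.
From mathcomp Require Import lra ring.
Set Implicit Arguments. Unset Strict Implicit. Unset Printing Implicit Defensive.
Import Order.TTheory GRing.Theory Num.Theory.
Import numFieldNormedType.Exports.
Local Open Scope classical_set_scope.
Local Open Scope ring_scope.

(* d1 <= d2: a feasible f for d1 gives the feasible pair (f, -f) for d2.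
   d2 <= d1: for (f, g) feasible for d2, taking b = 0 shows f x <= |x| on X,
   so the McShane-type extension
     H z = sup_{a >= 0, x in X} (a f x - |a x - z|)
   of the positively homogeneous function a x |-> a f x is finite, 1-Lipschitz
   and positively homogeneous; hence H is feasible for d1, H >= f on X and
   H <= -g on X, which gives u(f) + v(g) <= u(H) - v(H).
   d2 <= d2^eps trivially.  d2^eps <= d2 + 2 eps: dividing a, b by a + b
   reduces the constraint of D2 to that of D2eps, so (f - eps, g - eps) lies
   in D2 whenever (f, g) lies in D2eps eps; integrating against probability
   measures on X costs exactly 2 eps. *)

Lemma open_borel_measurable (R : realType) (V : normedModType R) (W : set V) :
  open W -> measurable (W : set (borelType V)).
Proof. by move=> oW; apply: sub_sigma_algebra. Qed.

Section ContinuousOnCompact.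
Variables (R : realType) (V : normedModType R) (X : set V).

Lemma CX_opp f : CX X f -> CX X (fun x => - f x).
Proof. by move=> cf x; apply: cvgN; exact: cf. Qed.

Lemma CX_subr f c : CX X f -> CX X (fun x => f x - c).
Proof. by move=> cf x; apply: cvgB; [exact: cf | exact: cvg_cst]. Qed.

Hypothesis compactX : compact X.

Lemma compact_borel_measurable : measurable (X : set (borelType V)).
Proof.
have cX : closed X by apply: compact_closed => //; exact: hausdorff_normed.
rewrite -[X]setCK; apply: measurableC; apply: open_borel_measurable.
exact: closed_openC.
Qed.

Lemma CX_measurable_fun f : CX X f -> measurable_fun (X : set (borelType V)) f.
Proof.
move=> /continuousP cf.
apply: (measurability _ (measurable_realfun.RGenOpens.measurableE R)).
move=> _ [_ [a [b ->] <-]].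
have /open_subspaceP [W oW WX] :=
  cf _ (@interval_open R (BRight a) (BLeft b) erefl erefl).
rewrite setIC -WX; apply: measurableI; first exact: open_borel_measurable.
exact: compact_borel_measurable.
Qed.

Variable P : probability (borelType V) R.

Lemma CX_integrable f : CX X f -> P.-integrable X (EFin \o f).
Proof.
move=> cf; apply: measurable_bounded_integrable.
- exact: compact_borel_measurable.
- by rewrite (le_lt_trans (probability_le1 _ compact_borel_measurable)) ?ltry.
- exact: CX_measurable_fun.
- have /compact_bounded[M [_ hM]] := continuous_compact cf compactX.
  by exists M; split; rewrite ?num_real // => ? ? ? ?; exact: hM.
Qed.

Lemma ev_opp f : CX X f -> ev X P (fun x => - f x) = (- ev X P f)%E.
Proof.
move=> cf; rewrite /ev; under eq_integral do rewrite EFinN.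
apply: integralN; apply: (integrable_add_def compact_borel_measurable).
exact: CX_integrable.
Qed.

Lemma ev_le f g : CX X f -> CX X g -> (forall x, X x -> f x <= g x) ->
  (ev X P f <= ev X P g)%E.
Proof.
move=> cf cg fg; apply: (le_integral compact_borel_measurable).
- exact: CX_integrable.
- exact: CX_integrable.
- by move=> x /set_mem Xx; rewrite lee_fin fg.
Qed.

Lemma ev_subr f c : CX X f -> P X = 1%E ->
  ev X P (fun x => f x - c) = (ev X P f - c%:E)%E.
Proof.
move=> cf PX; rewrite /ev; under eq_integral do rewrite EFinB.
rewrite (integralB_EFin compact_borel_measurable (CX_integrable cf)); last first.
  by apply: (CX_integrable (f := fun=> c)) => x; exact: cvg_cst.
have := integral_cst P compact_borel_measurable c%:E; rewrite /cst => ->.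
by rewrite -[in RHS](mule1 c%:E) -PX.
Qed.

End ContinuousOnCompact.

Section Envelope.
Variables (R : realType) (V : normedModType R) (X : set V) (f : V -> R).
Hypothesis f_le_norm : forall x, X x -> f x <= `|x|.

(* The value -|z| (the term a = 0) keeps the set nonempty for empty X. *)
Definition envelope_set (z : V) : set R :=
  [set r | r = - `|z| \/
           exists a x, 0 <= a /\ X x /\ r = a * f x - `|a *: x - z|].

Definition envelope (z : V) : R := sup (envelope_set z).

Lemma envelope_set_ub z : ubound (envelope_set z) `|z|.
Proof.
move=> r [->|[a [x [a0 [Xx ->]]]]]; first by have := normr_ge0 z; lra.
have afx : a * f x <= `|a *: x| by rewrite normrZ ger0_norm ?ler_wpM2l ?f_le_norm.
have tri : `|a *: x| <= `|a *: x - z| + `|z|.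
  by rewrite -[X in `|X| <= _](subrK z) ler_normD.
lra.
Qed.

Lemma envelope_set_neq0 z : envelope_set z !=set0.
Proof. by exists (- `|z|); left. Qed.

Lemma has_ubound_envelope_set z : has_ubound (envelope_set z).
Proof. by exists `|z|; exact: envelope_set_ub. Qed.

Lemma envelope_ge z a x : 0 <= a -> X x ->
  a * f x - `|a *: x - z| <= envelope z.
Proof.
move=> a0 Xx; apply: ub_le_sup (has_ubound_envelope_set z) _ _.
by right; exists a, x.
Qed.

Lemma envelope_ge_oppnorm z : - `|z| <= envelope z.
Proof. by apply: ub_le_sup (has_ubound_envelope_set z) _ _; left. Qed.

Lemma envelope_le_norm z : envelope z <= `|z|.
Proof. exact: ge_sup (envelope_set_neq0 z) (@envelope_set_ub z). Qed.

Lemma envelope0 : envelope 0 = 0.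
Proof.
apply/le_anti; have := envelope_le_norm 0; have := envelope_ge_oppnorm 0.
rewrite normr0; lra.
Qed.

Lemma envelope_le_add z w : envelope z <= envelope w + `|z - w|.
Proof.
apply: ge_sup (envelope_set_neq0 z) _ => r [->|[a [x [a0 [Xx ->]]]]].
  have := envelope_ge_oppnorm w; have : `|w| <= `|z| + `|w - z|.
    by rewrite -[X in `|X| <= _](subrK z) addrC ler_normD.
  rewrite distrC; lra.
have := envelope_ge w a0 Xx.
have : `|a *: x - w| <= `|a *: x - z| + `|z - w|.
  by rewrite [X in `|X|](_ : _ = (a *: x - z) + (z - w)) ?ler_normD // addrA subrK.
lra.
Qed.

Lemma continuous_envelope : continuous envelope.
Proof.
move=> z; apply/cvgrPdist_lt => e e0; apply/nbhs_ballP; exists e => // w.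
rewrite -ball_normE /= => zw.
have := envelope_le_add z w; have := envelope_le_add w z.
rewrite (distrC w z); rewrite ltr_norml in zw *.
have := normr_ge0 (z - w); lra.
Qed.

Lemma envelope_scale_ge k z : 0 < k -> k * envelope z <= envelope (k *: z).
Proof.
move=> k0; rewrite mulrC -ler_pdivlMr //.
apply: ge_sup (envelope_set_neq0 z) _ => r [->|[a [x [a0 [Xx ->]]]]];
  rewrite ler_pdivlMr //.
  have := envelope_ge_oppnorm (k *: z).
  rewrite normrZ gtr0_norm // mulNr (mulrC `|z|); lra.
have := envelope_ge (k *: z) (mulr_ge0 (ltW k0) a0) Xx.
rewrite -scalerA -scalerBr normrZ gtr0_norm //.
by have -> : (a * f x - `|a *: x - z|) * k = k * a * f x - k * `|a *: x - z|
  by ring.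
Qed.

Lemma envelope_scale k z : 0 <= k -> k * envelope z = envelope (k *: z).
Proof.
rewrite le0r => /orP[/eqP->|k0]; first by rewrite mul0r scale0r envelope0.
apply/le_anti; rewrite envelope_scale_ge //=.
have kV0 : 0 < k^-1 by rewrite invr_gt0.
have := envelope_scale_ge (k *: z) kV0; rewrite scalerA mulVf ?gt_eqF // scale1r.
by rewrite -(ler_pM2l k0) mulrA mulfV ?gt_eqF // mul1r.
Qed.

Lemma envelope_D1 : D1 X envelope.
Proof.
split; first by apply: continuous_subspaceT; exact: continuous_envelope.
move=> x y Xx Xy a b a0 b0.
rewrite (envelope_scale x a0) (envelope_scale y b0).
have := envelope_le_add (a *: x) (b *: y); lra.
Qed.

Lemma le_envelope x : X x -> f x <= envelope x.
Proof.
move=> Xx; have := envelope_ge x ler01 Xx.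
by rewrite scale1r subrr normr0 subr0 mul1r.
Qed.

Lemma envelope_le_opp (g : V -> R) y : X y ->
  (forall x a, X x -> 0 <= a -> a * f x + g y <= `|a *: x - y|) ->
  envelope y <= - g y.
Proof.
move=> Xy fg; apply: ge_sup (envelope_set_neq0 y) _ => r.
case=> [->|[a [x [a0 [Xx ->]]]]]; last by have := fg x a Xx a0; lra.
have := fg y 0 Xy (lexx 0).
rewrite mul0r add0r scale0r sub0r normrN; lra.
Qed.

End Envelope.

Section Comparisons.
Variables (R : realType) (V : normedModType R) (X : set V).
Hypothesis compactX : compact X.

Lemma D2eps_subr eps f g : 0 < eps -> D2eps X eps (f, g) ->
  D2 X (fun x => f x - eps, fun y => g y - eps).
Proof.
move=> eps0 [cf [cg fg]]; split; first exact: CX_subr.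
split; first exact: CX_subr.
move=> x y Xx Xy a b a0 b0 /=.
have [ab0|ab_le0] := ltrP 0 (a + b); last first.
  have -> : a = 0 by lra.
  have -> : b = 0 by lra.
  by rewrite !mul0r addr0 !scale0r subrr normr0.
have ab_neq0 : a + b != 0 by rewrite gt_eqF.
have a_in01 : 0 <= a / (a + b) <= 1.
  apply/andP; split; first exact: divr_ge0 (ltW ab0).
  by rewrite ler_pdivrMr // mul1r lerDl.
have b_in01 : 0 <= b / (a + b) <= 1.
  apply/andP; split; first exact: divr_ge0 (ltW ab0).
  by rewrite ler_pdivrMr // mul1r lerDr.
have := fg x y Xx Xy _ _ a_in01 b_in01.
have -> : (a / (a + b)) *: x - (b / (a + b)) *: y =
          (a + b)^-1 *: (a *: x - b *: y).
  by rewrite scalerBr !scalerA ![_^-1 * _]mulrC.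
rewrite normrZ ger0_norm; last by rewrite invr_ge0 ltW.
move=> /(ler_wpM2l (ltW ab0)).
have -> : (a + b) * (a / (a + b) * f x + b / (a + b) * g y) = a * f x + b * g y.
  by field.
have -> : (a + b) * (eps + (a + b)^-1 * `|a *: x - b *: y|) =
          (a + b) * eps + `|a *: x - b *: y|.
  by field.
lra.
Qed.

Local Open Scope ereal_scope.

Lemma d1_le_d2 (u v : probability (borelType V) R) : d1 X u v <= d2 X u v.
Proof.
apply: ge_ereal_sup => _ [f [cf fP] <-].
apply: ereal_sup_ubound; exists (f, fun x => (- f x)%R).
  split=> //; split; first exact: CX_opp.
  by move=> x y Xx Xy a b a0 b0 /=; rewrite mulrN; exact: fP.
by rewrite /= ev_opp.
Qed.

Lemma d2_le_d1 (u v : probability (borelType V) R) : d2 X u v <= d1 X u v.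
Proof.
apply: ge_ereal_sup => _ [[f g] [/= cf [/= cg fg]] <-] /=.
have f_le_norm x : X x -> (f x <= `|x|)%R.
  move=> Xx; have := fg x x Xx Xx 1%R 0%R ler01 (lexx 0%R).
  by rewrite mul0r addr0 mul1r scale0r subr0 scale1r.
have envD1 := envelope_D1 f_le_norm.
have [cH _] := envD1.
apply: le_trans (ereal_sup_ubound _); last by exists (envelope X f).
apply: leeD; first by apply: ev_le => // x; exact: le_envelope.
rewrite -ev_opp //; apply: ev_le => //; first exact: CX_opp.
move=> y Xy; rewrite lerNr; apply: envelope_le_opp => // x a Xx a0.
by have := fg x y Xx Xy a 1%R a0 ler01; rewrite mul1r scale1r.
Qed.

Lemma d2_le_d2plus (u v : probability (borelType V) R) :
  d2 X u v <= d2plus X u v.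
Proof.
apply/ereal_infP => _ [e e0 <-].
apply: ereal_sup_le => _ [[f g] [cf [cg fg]] <-]; exists (f, g) => //.
split=> //; split=> // x y Xx Xy a b /andP[a0 _] /andP[b0 _].
by apply: le_trans (fg x y Xx Xy a b a0 b0) _; rewrite lerDr ltW.
Qed.

Lemma d2plus_le_d2 (u v : probability (borelType V) R) :
  u X = 1 -> v X = 1 -> d2plus X u v <= d2 X u v.
Proof.
move=> uX vX; apply/lee_addgt0Pr => e e0.
have e20 : (0 < e / 2)%R by rewrite divr_gt0.
apply: (@le_trans _ _ (d2eps X (e / 2)%R u v)).
  by apply: ereal_inf_lbound; exists (e / 2)%R.
apply: ge_ereal_sup => _ [[f g] fgP <-] /=.
have shifted := D2eps_subr e20 fgP.
have [/= cf [/= cg _]] := fgP.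
rewrite -[ev X u f](subeK (ev X u f) (_ : (e / 2)%:E \is a fin_num)) //.
rewrite -[ev X v g](subeK (ev X v g) (_ : (e / 2)%:E \is a fin_num)) //.
rewrite -!ev_subr // addeACA -EFinD -splitr leeD2r //.
by apply: ereal_sup_ubound; exists (fun x => f x - e / 2, fun y => g y - e / 2)%R.
Qed.

End Comparisons.

Theorem proposition1 (R : realType) (V : normedModType R) (X : set V)
  (hX : compact X) (u v : probability (borelType V) R)
  (hu : u X = 1%E) (hv : v X = 1%E) :
  d1 X u v = d2 X u v /\ d2 X u v = d2plus X u v.
Proof.
split; apply/le_anti/andP; split.
- exact: d1_le_d2.
- exact: d2_le_d1.
- exact: d2_le_d2plus.
- exact: d2plus_le_d2.
Qed.
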